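(* Let $\gamma=000\cdots\in\Omega$ be the all-zero sequence and $B=\Omega\setminus\{\gamma\}$. Then $B\in\mathcal{B}_{\mathcal{U}}$ and $\widehat{\mu}(B)=1$.
   Context: For $n\ge1$, $\Omega_n$ is the set of strings $\alpha_0\alpha_1\cdots\alpha_n$ with $\alpha_k\in\{0,1\}$, $\alpha_0=0$. For $\omega=\alpha_0\cdots\alpha_n$, $\omega'=\alpha'_0\cdots\alpha'_n\in\Omega_n$ let $D^n(\omega,\omega')=2^{-n}\prod_{k=1}^n i^{|\alpha_k-\alpha_{k-1}|}\prod_{k=1}^n i^{-|\alpha'_k-\alpha'_{k-1}|}\,\delta_{\alpha_n\alpha'_n}$ ($i=\sqrt{-1}$) and for $A\subseteq\Omega_n$, $\mu_n(A)=\sum_{\omega,\omega'\in A}D^n(\omega,\omega')$. $\Omega$ is the set of infinite sequences $\alpha_0\alpha_1\cdots$ with $\alpha_k\in\{0,1\}$, $\alpha_0=0$. A cylinder set is a set $\{\alpha_0\alpha_1\cdots\in\Omega:\alpha_0\cdots\alpha_n\in E\}$ with $E\subseteq\Omega_n$; its measure is $\mu(\cdot)=\mu_n(E)$ (well defined). For $A\subseteq\Omega$ and $n\ge0$, $A^{(n)}=\{\omega\in\Omega:\text{some }\omega'\in A\text{ has the same first }n+1\text{ entries as }\omega\}$ (a cylinder set). $A$ is an upper set if $A=\bigcup_n\big(\Omega\setminus(\Omega\setminus A)^{(n)}\big)$; $\mathcal{U}$ is the collection of upper sets; $\mathcal{B}_{\mathcal{U}}=\{A\in\mathcal{U}:\lim_{n\to\infty}\mu\big(\Omega\setminus(\Omega\setminus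 A)^{(n)}\big)\text{ exists}\}$, and for $A\in\mathcal{B}_{\mathcal{U}}$, $\widehat{\mu}(A)=\lim_{n\to\infty}\mu\big(\Omega\setminus(\Omega\setminus A)^{(n)}\big)$. *)

From mathcomp Require Import all_boot all_order all_algebra.
From mathcomp Require Import boolp classical_sets reals.
From mathcomp.real_closed Require Import complex.
Set Implicit Arguments. Unset Strict Implicit. Unset Printing Implicit Defensive.
Import GRing.Theory Num.Theory.
Local Open Scope ring_scope.
Local Open Scope classical_set_scope.

(* Infinite sequences alpha_0 alpha_1 ... are functions nat -> bool
   (false = 0, true = 1); Omega is the set of those with alpha_0 = 0. *)
Definition Omega : set (nat -> bool) := [set a | a 0%N = false].

(* Strings alpha_0 ... alpha_n : finite functions on {0..n}.
   Omega_n = those with alpha_0 = 0. *)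
Definition str (n : nat) := {ffun 'I_n.+1 -> bool}.
Definition in_Omega_n (n : nat) (w : str n) : bool := w ord0 == false.

(* D^n(w,w') = 2^{-n} prod_{k=1}^n i^{|a_k - a_{k-1}|}
                      prod_{k=1}^n i^{-|a'_k - a'_{k-1}|} delta_{a_n a'_n};
   for bits, |a_k - a_{k-1}| = (a_k != a_{k-1}). *)
Definition Dn (R : realType) (n : nat) (w w' : str n) : R[i] :=
  (2%:R ^- n) *
  (\prod_(1 <= k < n.+1) ('i : R[i]) ^+ (w (inord k) != w (inord k.-1))) *
  (\prod_(1 <= k < n.+1) ('i : R[i]) ^- (w' (inord k) != w' (inord k.-1))) *
  ((w ord_max == w' ord_max)%:R).

Definition mu_n (R : realType) (n : nat) (E : pred (str n)) : R[i] :=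
  \sum_(w | E w && in_Omega_n w) \sum_(w' | E w' && in_Omega_n w') Dn R w w'.

Definition prefix (n : nat) (a : nat -> bool) : str n := [ffun k => a (val k)].

(* The measure of a cylinder set C determined by the first n+1 entries:
   C = {a in Omega : prefix n a in E} with E the set of prefixes of C. *)
Definition mu_cyl (R : realType) (n : nat) (C : set (nat -> bool)) : R[i] :=
  mu_n R (fun w => `[< exists2 a, C a & prefix n a = w >]).

Definition cyl (A : set (nat -> bool)) (n : nat) : set (nat -> bool) :=
  [set w | Omega w /\ exists2 w', A w' & forall k, (k <= n)%N -> w k = w' k].

Definition inner (A : set (nat -> bool)) (n : nat) : set (nat -> bool) :=
  Omega `\` cyl (Omega `\` A) n.

Definition upper_set (A : set (nat -> bool)) : Prop :=
  A = \bigcup_n inner A n.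

Definition cvgC (R : realType) (u : nat -> R[i]) (L : R[i]) : Prop :=
  forall e : R[i], 0 < e -> exists N : nat, forall n, (N <= n)%N -> `|u n - L| < e.

Definition in_BU (R : realType) (A : set (nat -> bool)) : Prop :=
  upper_set A /\ exists L : R[i], cvgC (fun n => mu_cyl R n (inner A n)) L.

(* muhat(A) = L, for A in B_U (the limit is unique) *)
Definition muhat_eq (R : realType) (A : set (nat -> bool)) (L : R[i]) : Prop :=
  cvgC (fun n => mu_cyl R n (inner A n)) L.

Definition gamma : nat -> bool := fun _ => false.
Definition Bset : set (nat -> bool) := Omega `\` [set gamma].

Arguments in_BU R A : clear implicits.
Arguments muhat_eq R A L : clear implicits.

From Pilot Require Import Defs.
From mathcomp Require Import all_boot all_order all_algebra.
From mathcomp Require Import boolp classical_sets reals.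
From mathcomp.real_closed Require Import complex.
From mathcomp Require Import ring lra.
Import Order.TTheory GRing.Theory Num.Theory.
Local Open Scope ring_scope.
Local Open Scope complex_scope.
Local Open Scope classical_set_scope.
Set Implicit Arguments. Unset Strict Implicit.

(* Grouping the double sum defining [mu_n E] by the common last letter gives
   [mu_n E = 2^-n (|S_1 E|^2 + |S_0 E|^2)], where [S_b E] sums
   [i^(number of letter changes)] over the strings of [E] ending in [b].
   Over all of Omega_n, appending a letter shows that [S_0] and [S_1 / i] are
   the real and imaginary parts [c_n], [s_n] of [(1 + i)^n].  The cylinder
   approximation [inner B n] of B consists of all strings except [0...0],
   whose removal only subtracts 1 from [S_0]; hence
   [mu (inner B n) = 2^-n (s_n^2 + (c_n - 1)^2) = 1 + (1 - 2 c_n) / 2^n],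
   which tends to 1 because [c_n^2 <= 2^n]. *)

Lemma Omega_setD_Bset : Omega `\` Bset = [set gamma].
Proof.
apply/seteqP; split=> a /=.
  by case=> Oa NB; apply: contrapT => Ngamma; apply: NB.
by move=> ->; split; [|case=> _; apply].
Qed.

Lemma inner_BsetP n a :
  inner Bset n a <-> Omega a /\ exists2 k, (k <= n)%N & a k.
Proof.
rewrite /inner /cyl Omega_setD_Bset; split.
  case=> Oa Ncyl; split=> //; apply: contrapT => Nex; apply: Ncyl; split=> //.
  by exists gamma => // k kn; apply/negbTE/negP => ak; apply: Nex; exists k.
case=> Oa [k kn ak]; split=> //; case=> _ [_ -> agree].
by move: ak; rewrite agree.
Qed.

Lemma upper_set_Bset : upper_set Bset.
Proof.
apply/seteqP; split=> a.
  case=> Oa Ngamma; have [k ak] : exists k, a k.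
    apply: contrapT => Nex; apply: Ngamma; apply/funext => k.
    by apply/negbTE/negP => ak; apply: Nex; exists k.
  by exists k => //; apply/inner_BsetP; split=> //; exists k.
case=> n _ /inner_BsetP[Oa [k _ ak]]; split=> // agamma.
by move: ak; rewrite agamma.
Qed.

Definition snoc_str n (p : str n * bool) : str n.+1 :=
  [ffun k : 'I_n.+2 => if (val k <= n)%N then p.1 (inord k) else p.2].

Definition unsnoc_str n (w : str n.+1) : str n * bool :=
  ([ffun k : 'I_n.+1 => w (inord k)], w ord_max).

Lemma snoc_strK n : cancel (@snoc_str n) (@unsnoc_str n).
Proof.
case=> u c; rewrite /unsnoc_str /snoc_str; congr pair; last by rewrite ffunE /= ltnn.
apply/ffunP=> k; rewrite !ffunE /= inordK; last by rewrite ltnS ltnW.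
by rewrite -ltnS ltn_ord inord_val.
Qed.

Lemma unsnoc_strK n : cancel (@unsnoc_str n) (@snoc_str n).
Proof.
move=> w; apply/ffunP=> k; rewrite /unsnoc_str /snoc_str !ffunE /=.
case: ifP => kn.
  by congr (w _); apply/val_inj; rewrite /= !inordK // ltnS ltnW.
congr (w _); apply/val_inj => /=; move: (ltn_ord k) kn.
by rewrite ltnS leq_eqVlt => /orP[/eqP //|]; rewrite ltnS => ->.
Qed.

Lemma snoc_str_inord n u c j : (j <= n)%N -> @snoc_str n (u, c) (inord j) = u (inord j).
Proof. by move=> jn; rewrite ffunE /= inordK ?jn // ltnS ltnW. Qed.

Lemma snoc_str_last n u c : @snoc_str n (u, c) ord_max = c.
Proof. by rewrite ffunE /= ltnn. Qed.

Definition zero_str n : str n := [ffun => false].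

Section PathSums.
Variable K : comPzRingType.
Implicit Types (z : K) (n : nat) (b : bool).

Definition flip_weight z n (w : str n) : K :=
  \prod_(1 <= k < n.+1) z ^+ (w (inord k) != w (inord k.-1)).

Definition end_sum z n (E : pred (str n)) b : K :=
  \sum_(w | (E w && in_Omega_n w) && (w ord_max == b)) flip_weight z w.

Definition path_sum z n b : K := end_sum z (fun _ : str n => true) b.

Lemma flip_weight_zero z n : flip_weight z (zero_str n) = 1.
Proof. by rewrite /flip_weight big1 // => k _; rewrite !ffunE. Qed.

Lemma flip_weight_snoc z n u c :
  flip_weight z (@snoc_str n (u, c)) = flip_weight z u * z ^+ (c != u ord_max).
Proof.
rewrite /flip_weight big_nat_recr //=; congr (_ * _).
  apply: eq_big_nat => k /andP[_ kn]; rewrite ltnS in kn.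
  by rewrite !snoc_str_inord // (leq_trans (leq_pred k)).
have -> : (inord n.+1 : 'I_n.+2) = ord_max by apply/val_inj; rewrite /= inordK.
rewrite snoc_str_last snoc_str_inord //.
by have -> : (inord n : 'I_n.+1) = ord_max by apply/val_inj; rewrite /= inordK.
Qed.

Lemma path_sumS z n b : path_sum z n.+1 b = path_sum z n b + z * path_sum z n (~~ b).
Proof.
rewrite /path_sum /end_sum /in_Omega_n /=.
rewrite (reindex (@snoc_str n)) /=; last first.
  by exists (@unsnoc_str n) => w _; [apply: snoc_strK | apply: unsnoc_strK].
rewrite (eq_big (fun p : str n * bool => (p.1 ord0 == false) && (p.2 == b))
   (fun p => flip_weight z p.1 * z ^+ (p.2 != p.1 ord_max))); first last.
- by case=> u c _; rewrite flip_weight_snoc.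
- case=> u c /=; rewrite snoc_str_last.
  have -> : (ord0 : 'I_n.+2) = inord 0 by apply/val_inj; rewrite /= inordK.
  rewrite snoc_str_inord //.
  by have -> : (inord 0 : 'I_n.+1) = ord0 by apply/val_inj; rewrite /= inordK.
rewrite -(pair_big (fun u : str n => u ord0 == false) (pred1 b)
   (fun u c => flip_weight z u * z ^+ (c != u ord_max))) /=.
under eq_bigr => u _ do rewrite (big_pred1 b) //.
rewrite (bigID (fun u : str n => u ord_max == b)) /= big_distrr /=; congr (_ + _).
  by apply: eq_big => // u /andP[_ /eqP ->]; rewrite eqxx mulr1.
apply: eq_big => [u|u /andP[_]].
  by congr (_ && _); case: b; case: (u ord_max).
by case: b; case: (u ord_max) => //= _; rewrite mulrC.
Qed.

Lemma path_sum0 z b : path_sum z 0 b = (~~ b)%:R.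
Proof.
rewrite /path_sum /end_sum /in_Omega_n.
have -> : (ord_max : 'I_1) = ord0 by apply/val_inj.
case: b => /=.
  by rewrite big_pred0 // => w; case: (w ord0).
rewrite (big_pred1 (zero_str 0)) ?flip_weight_zero // => w /=.
rewrite andbb; apply/eqP/eqP => [w0|->]; last by rewrite ffunE.
by apply/ffunP => k; rewrite ffunE (ord1 k).
Qed.

End PathSums.

(* [pow_1i n = (c, s)] where [(1 + i)^n = c + i s]. *)
Fixpoint pow_1i (R : pzRingType) n : R * R :=
  if n is m.+1 then ((pow_1i R m).1 - (pow_1i R m).2, (pow_1i R m).2 + (pow_1i R m).1)
  else (1, 0).

Lemma pow_1i_norm (R : comPzRingType) n :
  (pow_1i R n).1 ^+ 2 + (pow_1i R n).2 ^+ 2 = 2%:R ^+ n.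
Proof.
elim: n => [|n IHn] /=; first by rewrite expr1n expr0n addr0.
by rewrite [RHS]exprS -IHn; ring.
Qed.

Lemma path_sum_sqrtN1 (R : rcfType) (z : R[i]) n : z ^+ 2 = -1 ->
  path_sum z n false = (pow_1i R n).1%:C /\ path_sum z n true = z * (pow_1i R n).2%:C.
Proof.
move=> zz; elim: n => [|n [IHf IHt]]; first by rewrite !path_sum0 mulr0.
rewrite !path_sumS /= IHf IHt !rmorphD !rmorphN /=; split; last by rewrite mulrDr addrC.
by rewrite mulrA -expr2 zz mulN1r.
Qed.

Lemma Dn_flip_weight (R : realType) n (w w' : str n) : Dn R w w' =
  2%:R ^- n * flip_weight 'i w * flip_weight 'i^-1 w' * (w ord_max == w' ord_max)%:R.
Proof. by congr (_ * _ * _); apply: eq_bigr => k _; rewrite exprVn. Qed.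

Lemma mu_n_end_sums (R : realType) n (E : pred (str n)) :
  mu_n R E = 2%:R ^- n * (end_sum 'i E true * end_sum 'i^-1 E true
                          + end_sum 'i E false * end_sum 'i^-1 E false).
Proof.
have sum_same_end (w : str n) : \sum_(w' | E w' && in_Omega_n w')
    flip_weight 'i^-1 w' * (w ord_max == w' ord_max)%:R = end_sum 'i^-1 E (w ord_max).
  rewrite /end_sum [RHS]big_mkcondr /=; apply: eq_bigr => w' _.
  by rewrite eq_sym; case: eqP => _; rewrite ?mulr1 ?mulr0.
rewrite /mu_n.
under eq_bigr => w _ do under eq_bigr => w' _ do rewrite Dn_flip_weight -!mulrA.
under eq_bigr => w _ do rewrite -big_distrr -big_distrr /= sum_same_end.
rewrite -big_distrr /=; congr (_ * _).
rewrite (partition_big (fun w : str n => w ord_max) xpredT) // big_bool /=.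
rewrite /end_sum !big_distrl /=.
by congr (_ + _); apply: eq_bigr => w /andP[_ /eqP ->].
Qed.

Definition inner_B_prefix n : pred (str n) :=
  fun w => `[< exists2 a, inner Bset n a & Defs.prefix n a = w >].
Arguments inner_B_prefix : clear implicits.

Lemma inner_B_prefixE n (w : str n) :
  inner_B_prefix n w && in_Omega_n w = in_Omega_n w && (w != zero_str n).
Proof.
apply/idP/idP.
  case/andP => /asboolP[a /inner_BsetP[Oa [k kn ak]] <-] _.
  rewrite /in_Omega_n ffunE /= Oa eqxx /=; apply/eqP => /ffunP/(_ (inord k)).
  by rewrite !ffunE /= inordK ?ltnS // ak.
case/andP => /eqP w0 nz; rewrite /in_Omega_n w0 eqxx andbT; apply/asboolP.
exists (fun k => if (k <= n)%N then w (inord k) else false); last first.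
  by apply/ffunP => k; rewrite ffunE -ltnS ltn_ord inord_val.
apply/inner_BsetP; split.
  rewrite /Omega /=.
  by have -> : (inord 0 : 'I_n.+1) = ord0 by apply/val_inj; rewrite /= inordK.
apply: contrapT => Nex; move/eqP: nz; apply; apply/ffunP => k; rewrite ffunE.
apply/negbTE/negP => wk; apply: Nex; exists k; first by rewrite -ltnS.
by rewrite -ltnS ltn_ord inord_val.
Qed.

Lemma end_sum_inner_B_true (R : realType) (z : R[i]) n :
  end_sum z (inner_B_prefix n) true = path_sum z n true.
Proof.
apply: eq_bigl => w; rewrite inner_B_prefixE /=.
case wn: (w ord_max); rewrite ?andbF ?andbT //; apply/andb_idr => _.
by apply/eqP => w0; rewrite w0 ffunE in wn.
Qed.

Lemma end_sum_inner_B_false (R : realType) (z : R[i]) n :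
  end_sum z (inner_B_prefix n) false = path_sum z n false - 1.
Proof.
rewrite /path_sum /end_sum [X in _ = X - _](bigD1 (zero_str n)) /=; last first.
  by rewrite /in_Omega_n !ffunE.
rewrite flip_weight_zero addrC addrK; apply: eq_bigl => w.
by rewrite inner_B_prefixE -!andbA; congr (_ && _); rewrite andbC.
Qed.

Lemma mu_inner_B (R : realType) n :
  mu_cyl R n (inner Bset n) = 1 + ((1 - 2%:R * (pow_1i R n).1) / 2%:R ^+ n)%:C.
Proof.
have [f1 t1] := path_sum_sqrtN1 n (sqr_i R).
have [f2 t2] : path_sum 'i^-1 n false = (pow_1i R n).1%:C /\
    path_sum 'i^-1 n true = 'i^-1 * (pow_1i R n).2%:C.
  by apply: path_sum_sqrtN1; rewrite exprVn sqr_i invrN1.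
have i_neq0 : ('i : R[i]) != 0.
  by apply: contra_eq_neq (sqr_i R) => ->; rewrite expr0n eq_sym oppr_eq0 oner_eq0.
set c := (pow_1i R n).1; set s := (pow_1i R n).2.
have muE : 2%:R ^- n * (s ^+ 2 + (c - 1) ^+ 2) = 1 + (1 - 2%:R * c) / 2%:R ^+ n.
  have P0 : (2%:R ^+ n : R) != 0 by rewrite expf_neq0 ?pnatr_eq0.
  apply: (mulfI P0); rewrite mulrA mulfV // mul1r mulrDr mulr1 mulrCA mulfV // mulr1.
  by rewrite -(pow_1i_norm R n) -/c -/s; ring.
rewrite /mu_cyl mu_n_end_sums !end_sum_inner_B_true !end_sum_inner_B_false.
rewrite f1 t1 f2 t2 mulrACA mulfV // mul1r.
rewrite -[X in _ = X + _](rmorph1 (real_complex R)) -rmorphD -muE.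
by rewrite rmorphM fmorphV rmorphXn rmorph_nat rmorphD !rmorphXn rmorphB rmorph1 !expr2.
Qed.

Lemma ltr_norm_sqr (R : realDomainType) (x r : R) : 0 < r -> x ^+ 2 < r ^+ 2 -> `|x| < r.
Proof.
move=> r0; rewrite -real_normK ?num_real //.
by rewrite ltr_pXn2r // ?nnegrE ?normr_ge0 // ltW.
Qed.

Lemma pow_1i_err_small (R : realType) (r : R) : 0 < r -> exists N : nat,
  forall n, (N <= n)%N -> `|(1 - 2%:R * (pow_1i R n).1) / 2%:R ^+ n| < r.
Proof.
move=> r0; exists (Num.Def.archi_bound (10%:R / r ^+ 2)) => n Nn.
have := pow_1i_norm R n; set c := (pow_1i R n).1; set P : R := 2%:R ^+ n => normP.
have P1 : 1 <= P by rewrite /P -natrX ler1n expn_gt0.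
have P0 : 0 < P by apply: lt_le_trans P1.
have P_large : 10%:R < r ^+ 2 * P.
  rewrite -ltr_pdivrMl ?exprn_gt0 // mulrC.
  apply: lt_le_trans (archi_boundP (divr_ge0 (ler0n _ _) (sqr_ge0 r))) _.
  by rewrite (@le_trans _ _ n%:R) // ?ler_nat // /P -natrX ler_nat ltnW // ltn_expl.
have err_le : (1 - 2%:R * c) ^+ 2 <= 10%:R * P.
  by have := sqr_ge0 (1 + 2%:R * c); have := sqr_ge0 (pow_1i R n).2; nra.
rewrite normrM normfV (gtr0_norm P0) ltr_pdivrMr //; apply: ltr_norm_sqr.
  exact: mulr_gt0.
by apply: le_lt_trans err_le _; rewrite exprMn [P ^+ 2]expr2 mulrA ltr_pM2r.
Qed.

Lemma muhat_Bset (R : realType) : muhat_eq R Bset 1.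
Proof.
move=> e; rewrite ltcE => /andP[/eqP Im_e Re_e_gt0].
have [N errN] := pow_1i_err_small Re_e_gt0.
exists N => n Nn; rewrite mu_inner_B addrAC subrr add0r.
by rewrite normc_def /= expr0n /= addr0 sqrtr_sqr ltcE /= Im_e eqxx errN.
Qed.

Theorem theorem4p6 (R : realType) : in_BU R Bset /\ muhat_eq R Bset 1.
Proof.
split; last exact: muhat_Bset.
by split; [exact: upper_set_Bset | exists 1; exact: muhat_Bset].
Qed.
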